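(* Let $S$ be a fixed set of permissible block sizes and $L$ a fixed set of permissible loop orders, and let $\mathcal{C}$ be the class of all Greechie diagrams all of whose blocks have size in $S$ and all of whose loops have order in $L$, optionally further restricted to connected diagrams. Then the only irreducible diagrams in $\mathcal{C}$ are those with exactly one block; equivalently, every $D\in\mathcal{C}$ with more than one block has a block $e$ with $D-e\in\mathcal{C}$.
   Context: A diagram is a pair $(V,E)$ with $V\neq\emptyset$ a set of atoms and $E$ a set of nonempty subsets of $V$ (blocks). A loop of order $n\ge2$ is a sequence $(e_1,\dots,e_n)$ of mutually different blocks for which there are mutually distinct atoms $\nu_1,\dots,\nu_n$ with $\nu_i\in e_i\cap e_{i+1}$ ($i=1,\dots,n$, $e_{n+1}=e_1$). A Greechie diagram is a diagram such that: (1) every atom belongs to at least one block; (2) if there are at least two atoms, every block has at least 2 elements; (3) every block intersecting another block has at least 3 elements; (4) two different blocks intersect in at most one atom; (5) there is no loop of order 3. A diagram is connected if for all atoms $\nu,\nu'$ there are blocks $e_1,\dots,e_k$ with $\nu\in e_1$, $\nu'\in e_k$ and $e_i\cap e_{i+1}\neq\emptyset$ for $1\le i\le k-1$. For $e\in E$, $D-e$ is obtained by removing $e$ and any atoms that lay in $e$ but in no other block. $D\in\mathcal{C}$ is irreducible if there is no block $e$ of $D$ with $D-e\in\mathcal{C}$. *)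

(* A diagram on a finite carrier type T:
   atoms V : {set T}, blocks E : {set {set T}}. *)
From mathcomp Require Import all_boot.
Set Implicit Arguments. Unset Strict Implicit. Unset Printing Implicit Defensive.

Section Diagrams.
Variable T : finType.

Definition diagram (V : {set T}) (E : {set {set T}}) : Prop :=
  V != set0 /\ (forall e, e \in E -> e != set0 /\ e \subset V).

(* A loop of order n >= 2: mutually different blocks e_0..e_{n-1} of E and
   mutually distinct atoms nu_0..nu_{n-1} with nu_i in e_i /\ e_{i+1}
   (indices mod n; ordS is the cyclic successor on 'I_n). *)
Definition has_loop (E : {set {set T}}) (n : nat) : Prop :=
  2 <= n /\
  exists (es : 'I_n -> {set T}) (nus : 'I_n -> T),
    [/\ injective es, injective nus, (forall i, es i \in E) &
        forall i, nus i \in es i /\ nus i \in es (ordS i)].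

Definition greechie (V : {set T}) (E : {set {set T}}) : Prop :=
  diagram V E /\
  (forall v, v \in V -> exists2 e, e \in E & v \in e) /\
  (1 < #|V| -> forall e, e \in E -> 2 <= #|e|) /\
  (forall e f, e \in E -> f \in E -> e != f -> e :&: f != set0 -> 3 <= #|e|) /\
  (forall e f, e \in E -> f \in E -> e != f -> #|e :&: f| <= 1) /\
  ~ has_loop E 3.

Definition connected (V : {set T}) (E : {set {set T}}) : Prop :=
  forall v w, v \in V -> w \in V ->
    exists es : seq {set T},
      [/\ es != [::], all (fun e => e \in E) es,
          v \in head set0 es, w \in last set0 es &
          path (fun a b => a :&: b != set0) (head set0 es) (behead es)].

Definition inC (S L : nat -> Prop) (conn : bool)
    (V : {set T}) (E : {set {set T}}) : Prop :=
  [/\ greechie V E,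
      (forall e, e \in E -> S #|e|),
      (forall n, has_loop E n -> L n) &
      (conn -> connected V E)].

(* D - e: remove block e and the atoms lying in e but in no other block. *)
Definition rem_atoms (V : {set T}) (E : {set {set T}}) (e : {set T}) : {set T} :=
  [set x in V | (x \notin e) || [exists f in E :\ e, x \in f]].
Definition rem_blocks (E : {set {set T}}) (e : {set T}) : {set {set T}} := E :\ e.

Definition irreducible (S L : nat -> Prop) (conn : bool)
    (V : {set T}) (E : {set {set T}}) : Prop :=
  inC S L conn V E /\
  ~ (exists2 e, e \in E & inC S L conn (rem_atoms V E e) (rem_blocks E e)).

End Diagrams.

(* Removing a block keeps every defining property of the class except
   possibly nonemptiness and connectedness: block sizes, pairwise
   intersections and loops of a subfamily of blocks are those of the whole
   diagram.  Nonemptiness survives as soon as a second block exists.  For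
   connectedness, consider the graph on blocks in which two blocks are
   adjacent when they meet; it is connected when the diagram is, and a block
   farthest from a fixed block is not a cut vertex, since a shortest walk to
   any other block cannot pass through it.  Conversely, removing the only
   block of a diagram removes all of its atoms. *)

From mathcomp Require Import all_boot.
Set Implicit Arguments. Unset Strict Implicit. Unset Printing Implicit Defensive.

Section NonCutVertex.
Variables (U : finType) (r : rel U).
Hypothesis r_sym : symmetric r.

Definition connected_in (A : {set U}) : Prop :=
  {in A &, forall a b, connect [rel x y in A | r x y] a b}.

Lemma path_in_all (A : {set U}) x p :
  path [rel x y in A | r x y] x p -> all (mem A) p.
Proof. by elim: p x => //= y p IHp x /andP[/andP[/andP[_ ->] _] /IHp]. Qed.

Section Distance.
Variables (A : {set U}) (a0 : U).

Local Notation walk := (path [rel x y in A | r x y] a0).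

Let walk_of_size u n : bool :=
  [exists p : n.-tuple U, walk p && (last a0 p == u)].

Lemma exists_walk_or_unreachable u :
  exists n, ~~ connect [rel x y in A | r x y] a0 u || walk_of_size u n.
Proof.
have [/connectP[p p_walk u_last]|] := boolP (connect _ a0 u); last by exists 0.
by exists (size p); apply/existsP; exists (in_tuple p); rewrite p_walk -u_last eqxx.
Qed.

(* Junk value [dist u = 0] when [u] is unreachable from [a0]. *)
Definition dist u : nat := ex_minn (exists_walk_or_unreachable u).

Lemma dist_le_size p : walk p -> dist (last a0 p) <= size p.
Proof.
move=> p_walk; rewrite /dist; case: ex_minnP => n _; apply.
by apply/orP; right; apply/existsP; exists (in_tuple p); rewrite p_walk eqxx.
Qed.

Hypothesis A_conn : connected_in A.
Hypothesis a0A : a0 \in A.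

Lemma shortest_walk u :
  u \in A -> exists2 p, walk p /\ last a0 p = u & size p = dist u.
Proof.
move=> uA; rewrite /dist; case: ex_minnP => n; rewrite A_conn //.
case/existsP=> p /andP[p_walk /eqP].
by exists p; rewrite ?size_tuple.
Qed.

Lemma shortest_walk_avoids_farthest e u p :
  {in A, forall v, dist v <= dist e} -> u \in A -> u != e ->
  walk p -> last a0 p = u -> size p = dist u -> e \notin a0 :: p.
Proof.
move=> e_far uA u_e p_walk p_last p_size; apply/negP => e_p.
move: p_walk p_last p_size; case/splitPl: e_p => p1 p2 p1_last.
rewrite cat_path last_cat size_cat => /andP[p1_walk _] p_last p_size.
have e_le_p1 : dist e <= size p1 by rewrite -p1_last dist_le_size.
have /eqP p2_nil : size p2 == 0.
  by rewrite -leqn0 -(leq_add2l (size p1)) addn0 p_size (leq_trans (e_far u uA)).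
move: u_e; rewrite -p_last p1_last.
by case: p2 {p_size p_last} p2_nil => // _; rewrite eqxx.
Qed.

Lemma farthest_vertex_noncut e :
  {in A, forall v, dist v <= dist e} -> connected_in (A :\ e).
Proof.
move=> e_far.
have rel_sym : symmetric [rel x y in A :\ e | r x y].
  by move=> x y /=; rewrite r_sym (andbC (x \in _)).
have reach u : u \in A :\ e -> connect [rel x y in A :\ e | r x y] a0 u.
  case/setD1P => u_e uA; have [p [p_walk p_last] p_size] := shortest_walk uA.
  have e_notin := shortest_walk_avoids_farthest e_far uA u_e p_walk p_last p_size.
  apply/connectP; exists p => //; apply: (sub_in_path (P := mem (A :\ e))) (p_walk).
    by move=> x y x_in y_in /andP[_ rxy]; rewrite /= x_in y_in.
  apply/allP => x x_p; apply/setD1P; split.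
    by apply: contraNneq e_notin => <-.
  by move: x_p; rewrite inE => /predU1P[-> // | /(allP (path_in_all p_walk))].
move=> a b a_in b_in; apply: connect_trans (reach b b_in).
by rewrite (sym_connect_sym rel_sym); apply: reach.
Qed.

End Distance.

Lemma exists_noncut_vertex (A : {set U}) :
  A != set0 -> connected_in A -> exists2 e, e \in A & connected_in (A :\ e).
Proof.
case/set0Pn => a0 a0A A_conn.
case: (@arg_maxnP _ a0 (mem A) (dist A a0) a0A) => e eA e_far.
by exists e; last exact: (farthest_vertex_noncut A_conn a0A e_far).
Qed.

End NonCutVertex.

Section Greechie.
Variable T : finType.
Implicit Types (V : {set T}) (E : {set {set T}}) (S L : nat -> Prop) (conn : bool).

Definition meets : rel {set T} := fun a b => a :&: b != set0.

Lemma meets_sym : symmetric meets.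
Proof. by move=> a b; rewrite /meets setIC. Qed.

Lemma meetsP (a b : {set T}) x : x \in a -> x \in b -> meets a b.
Proof. by move=> xa xb; apply/set0Pn; exists x; rewrite inE xa. Qed.

Lemma connected_blocks V E : diagram V E -> connected V E -> connected_in meets E.
Proof.
move=> [_ blocks] V_conn a b aE bE.
have [x xa] := set0Pn _ (blocks a aE).1; have [y yb] := set0Pn _ (blocks b bE).1.
have xV := subsetP (blocks a aE).2 x xa; have yV := subsetP (blocks b bE).2 y yb.
have [[|c es] [// _ cesE xc y_last es_path]] := V_conn x y xV yV.
have in_E : {in E &, subrel meets [rel u v in E | meets u v]} by move=> u v /= -> ->.
apply/connectP; exists (c :: rcons es b); last by rewrite /= last_rcons.
rewrite /= aE (allP cesE c (mem_head c es)) -/(meets a c) (meetsP xa xc).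
rewrite rcons_path (sub_in_path in_E cesE es_path) /= bE.
by rewrite (allP cesE _ (mem_last c es)); apply: meetsP y_last yb.
Qed.

Lemma connected_of_blocks V E :
  (forall v, v \in V -> exists2 e, e \in E & v \in e) ->
  connected_in meets E -> connected V E.
Proof.
move=> covered E_conn v w vV wV.
have [a aE va] := covered v vV; have [b bE wb] := covered w wV.
have /connectP[p p_path b_last] := E_conn a b aE bE.
exists (a :: p); split => //=; first by rewrite aE (path_in_all p_path).
  by rewrite -b_last.
by apply: sub_path p_path => c d /andP[].
Qed.

Lemma has_loop_sub E (F : {set {set T}}) n :
  E \subset F -> has_loop E n -> has_loop F n.
Proof.
move=> EF [n_ge2 [es [nus [es_inj nus_inj esE nusP]]]]; split=> //.
by exists es, nus; split=> // i; apply: (subsetP EF).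
Qed.

Lemma greechie_blocks_neq0 V E : greechie V E -> E != set0.
Proof.
move=> [[/set0Pn[v vV] _] [covered _]]; have [e eE _] := covered v vV.
by apply/set0Pn; exists e.
Qed.

Section SubDiagram.
Variables (V V' : {set T}) (E E' : {set {set T}}).
Hypotheses (V'V : V' \subset V) (E'E : E' \subset E) (E'_neq0 : E' != set0).
Hypothesis blocks'_sub : {in E', forall e : {set T}, e \subset V'}.
Hypothesis covered' : forall v, v \in V' -> exists2 e, e \in E' & v \in e.

Lemma greechie_sub : greechie V E -> greechie V' E'.
Proof.
have inE' e : e \in E' -> e \in E by apply: (subsetP E'E).
move=> [[_ blocks] [_ [size2 [size3 [meet1 no_loop3]]]]].
split; [split | split; [|split; [|split; [|split]]]] => //.
- have [e e_in] := set0Pn _ E'_neq0.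
  have [x xe] := set0Pn _ (blocks e (inE' e e_in)).1.
  by apply/set0Pn; exists x; apply: (subsetP (blocks'_sub e_in)).
- by move=> e e_in; split; [exact: (blocks e (inE' e e_in)).1 | exact: blocks'_sub].
- move=> V'_gt1 e /inE'; apply: size2.
  exact: leq_trans V'_gt1 (subset_leq_card V'V).
- by move=> e f /inE' eE /inE' fE; apply: size3.
- by move=> e f /inE' eE /inE' fE; apply: meet1.
- by move/(has_loop_sub E'E).
Qed.

Lemma inC_sub S L conn :
  (conn -> connected_in meets E') -> inC S L conn V E -> inC S L conn V' E'.
Proof.
move=> E'_conn [G sizes loops _]; split.
- exact: greechie_sub.
- by move=> e /(subsetP E'E); apply: sizes.
- by move=> n /(has_loop_sub E'E); apply: loops.
- by move=> /E'_conn; apply: connected_of_blocks.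
Qed.

End SubDiagram.

Section Removal.
Variables (V : {set T}) (E : {set {set T}}) (e : {set T}).

Lemma rem_atoms_sub : rem_atoms V E e \subset V.
Proof. by apply/subsetP => x; rewrite inE => /andP[]. Qed.

Lemma rem_blocks_sub : rem_blocks E e \subset E.
Proof. exact: subD1set. Qed.

Lemma rem_blocks_sub_atoms :
  diagram V E -> {in rem_blocks E e, forall f : {set T}, f \subset rem_atoms V E e}.
Proof.
move=> [_ blocks] f f_in; have fE := subsetP rem_blocks_sub f f_in.
apply/subsetP => x xf; rewrite inE (subsetP (blocks f fE).2 x xf) /=.
by apply/orP; right; apply/existsP; exists f; rewrite f_in.
Qed.

Lemma rem_atoms_covered :
  (forall v, v \in V -> exists2 f, f \in E & v \in f) ->
  forall v, v \in rem_atoms V E e -> exists2 f, f \in rem_blocks E e & v \in f.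
Proof.
move=> covered v; rewrite inE => /andP[vV /orP[v_e | /existsP[f /andP[f_in vf]]]].
- have [f fE vf] := covered v vV; exists f => //.
  by rewrite /rem_blocks in_setD1 fE andbT; apply: contraNneq v_e => <-.
- by exists f.
Qed.

Lemma inC_rem S L conn : e \in E -> 1 < #|E| ->
  (conn -> connected_in meets (E :\ e)) ->
  inC S L conn V E -> inC S L conn (rem_atoms V E e) (rem_blocks E e).
Proof.
move=> eE E_gt1 E'_conn C; have [[D [covered _]] _ _ _] := C.
have E'_neq0 : rem_blocks E e != set0.
  by move: E_gt1; rewrite (cardsD1 e E) eE ltnS card_gt0.
exact: (inC_sub rem_atoms_sub rem_blocks_sub E'_neq0 (rem_blocks_sub_atoms D)
                (rem_atoms_covered covered) E'_conn C).
Qed.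

End Removal.

Lemma exists_removable_block S L conn V E : inC S L conn V E -> 1 < #|E| ->
  exists2 e, e \in E & inC S L conn (rem_atoms V E e) (rem_blocks E e).
Proof.
move=> C E_gt1; have E_neq0 : E != set0 by rewrite -card_gt0 ltnW.
case: conn C => C; last first.
  by have [e eE] := set0Pn _ E_neq0; exists e; last exact: inC_rem.
have [[D _] _ _ /(_ isT) V_conn] := C.
have [e eE E'_conn] := exists_noncut_vertex meets_sym E_neq0 (connected_blocks D V_conn).
by exists e; last exact: inC_rem.
Qed.

End Greechie.

Theorem theorem3 (T : finType) (S L : nat -> Prop) (conn : bool)
    (V : {set T}) (E : {set {set T}}) :
  inC S L conn V E -> (irreducible S L conn V E <-> #|E| = 1).
Proof.
move=> C; have [G _ _ _] := C.
have E_gt0 : 0 < #|E| by rewrite card_gt0 (greechie_blocks_neq0 G).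
split=> [[_ irred] | /eqP/cards1P[e0 E1]].
- apply/eqP; rewrite eqn_leq E_gt0 andbT leqNgt; apply/negP => E_gt1.
  exact/irred/(exists_removable_block C).
- split=> // -[e eE [G' _ _ _]]; move: (greechie_blocks_neq0 G').
  by move: eE; rewrite /rem_blocks E1 in_set1 => /eqP->; rewrite setDv eqxx.
Qed.
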